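(* Let $F$ be a supertransversal fully-connected ReLU network. For cells $C,D$ of $\mathcal{C}(F)$ define the product $S(C)\cdot S(D)\in\{-1,0,1\}^N$ by $(S(C)\cdot S(D))_{ij}=S(C)_{ij}$ if $S(C)_{ij}\neq 0$ and $(S(C)\cdot S(D))_{ij}=S(D)_{ij}$ otherwise. Then for all cells $C,D$ of $\mathcal{C}(F)$ there exists a cell $E$ of $\mathcal{C}(F)$ with $S(C)\cdot S(D)=S(E)$, and moreover $C\le E$. Thus the set of sign sequences of cells of $\mathcal{C}(F)$ is a semigroup under this product.
   Context: A ReLU network of architecture $(n_0,\dots,n_m,1)$: affine maps $A_i:\mathbb{R}^{n_{i-1}}\to\mathbb{R}^{n_i}$, $1\le i\le m+1$, $n_{m+1}=1$; $F_i=\mathrm{ReLU}\circ A_i$ ($i\le m$), $G=A_{m+1}$, $F=G\circ F_m\circ\cdots\circ F_1$, $F_{(k)}=F_k\circ\cdots\circ F_1$ ($F_{(0)}=\mathrm{id}$), $F^{(k)}=G\circ F_m\circ\cdots\circ F_k:\mathbb{R}^{n_{k-1}}\to\mathbb{R}$ ($F^{(m+1)}=G$). Node maps $F_{ij}=\pi_j\circ A_i\circ F_{(i-1)}$, $1\le i\le m+1$, $1\le j\le n_i$; $N=n_1+\dots+n_m+1$. Polyhedra are finite intersections of closed half-spaces; $C^\circ$ is the relative interior; $C\le E$ means $C$ is a face of $E$ or equal to $E$. $R^{(i)}$ is the polyhedral complex on $\mathbb{R}^{n_{i-1}}$ induced by the hyperplanes $\{\pi_jA_i=0\}$, $1\le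 j\le n_i$ (cells: nonempty intersections of one choice among $\{\pi_jA_i\ge0\},\{\pi_jA_i\le0\},\{\pi_jA_i=0\}$ for each $j$). Canonical polyhedral complex: $\mathcal{C}(F_{(1)})=R^{(1)}$, $\mathcal{C}(F_{(k)})=\{C\cap F_{(k-1)}^{-1}(R)\neq\emptyset: C\in\mathcal{C}(F_{(k-1)}),R\in R^{(k)}\}$, $2\le k\le m+1$; $\mathcal{C}(F)$ is the last one. The same construction for $F^{(k)}$ gives $\mathcal{C}(F^{(k)})$ on $\mathbb{R}^{n_{k-1}}$, with $\mathcal{C}(F^{(m+1)})=R^{(m+1)}$. The sign sequence $S(C)=s(C)\in\{-1,0,1\}^N$ of a cell has entries $S(C)_{ij}=\mathrm{sgn}(F_{ij}(x))$ for $x\in C^\circ$. A map affine on cells of a polyhedral complex $X$ is transverse on cells of $X$ to a submanifold $Z$ if its restriction to $C^\circ$ is transverse to $Z$ for each cell $C$. Supertransversal: for every $1\le i\le m$, $F_i$ is transverse on cells of $R^{(i)}$ to the interior of every cell of $\mathcal{C}(F^{(i+1)})$. *)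

From HB Require Import structures.
From mathcomp Require Import all_boot all_order all_algebra.
From mathcomp Require Import reals.
Set Implicit Arguments. Unset Strict Implicit. Unset Printing Implicit Defensive.
Import Order.TTheory GRing.Theory Num.Theory.
Local Open Scope ring_scope.

Definition vec (R : realType) (k : nat) := 'I_k -> R.

Section Geometry.
Variable R : realType.

Definition dotv (k : nat) (a x : vec R k) : R := \sum_(l < k) a l * x l.

(* linear span of the differences x - y, x,y in S (direction of aff(S)) *)
Definition dir (k : nat) (S : vec R k -> Prop) (v : vec R k) : Prop :=
  exists (p : nat) (c : 'I_p -> R) (u w : 'I_p -> vec R k),
    (forall i, S (u i) /\ S (w i)) /\
    forall j, v j = \sum_(i < p) c i * (u i j - w i j).

Definition relint (k : nat) (S : vec R k -> Prop) (x : vec R k) : Prop :=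
  S x /\ exists eps : R, 0 < eps /\
    forall v, dir S v -> (forall j, `|v j| < eps) -> S (fun j => x j + v j).

(* C <= E : C is a face of the polyhedron E or equal to E
   (a = 0, b = 0 gives E itself) *)
Definition face_le (k : nat) (C E : vec R k -> Prop) : Prop :=
  exists (a : vec R k) (b : R),
    (forall x, E x -> dotv a x <= b) /\
    forall x, C x <-> (E x /\ dotv a x = b).

(* f restricted to C° (on which f agrees with the affine map x |-> L x + c)
   is transverse to the submanifold Z (an open subset of an affine subspace):
   at every x in C° with f x in Z, L (T_x C°) + T_{f x} Z is everything. *)
Definition transverse_on (a b : nat) (f : vec R a -> vec R b)
    (C : vec R a -> Prop) (Z : vec R b -> Prop) : Prop :=
  forall (L : 'I_b -> 'I_a -> R) (c : vec R b),
    (forall x, relint C x -> forall j, f x j = \sum_(l < a) L j l * x l + c j) ->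
    forall x, relint C x -> Z (f x) ->
    forall w : vec R b, exists u v,
      dir (relint C) u /\ dir Z v /\
      forall j, w j = \sum_(l < a) L j l * u l + v j.

End Geometry.

Inductive choice3 := ChGe | ChLe | ChEq.

Section Network.
Variable R : realType.
(* Architecture (n 0, ..., n m, n m.+1) with n m.+1 = 1 (imposed in the theorem).
   Paper's A_{i+1} : R^{n i} -> R^{n (i+1)} is x |-> W i x + bias i. *)
Variable m : nat.
Variable n : nat -> nat.
Variable W : forall i : nat, 'I_(n i.+1) -> 'I_(n i) -> R.
Variable bias : forall i : nat, 'I_(n i.+1) -> R.

Definition pre (i : nat) (x : vec R (n i)) : vec R (n i.+1) :=
  fun j => \sum_(l < n i) @W i j l * x l + @bias i j.

(* layer i = F_{i+1} = ReLU o A_{i+1} for i < m, and G = A_{m+1} for i = m *)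
Definition layer (i : nat) (x : vec R (n i)) : vec R (n i.+1) :=
  if (i < m)%N then (fun j => Num.max (pre x j) 0) else pre x.

Fixpoint Fto (k : nat) : vec R (n 0%N) -> vec R (n k) :=
  match k return vec R (n 0%N) -> vec R (n k) with
  | 0 => fun x => x
  | k'.+1 => fun x => @layer k' (@Fto k' x)
  end.

Fixpoint Ffrom (s t : nat) : vec R (n s) -> vec R (n (t + s)%N) :=
  match t return vec R (n s) -> vec R (n (t + s)%N) with
  | 0 => fun x => x
  | t'.+1 => fun x => @layer (t' + s)%N (@Ffrom s t' x)
  end.

(* cells of R^{(i+1)} on R^{n i}, induced by the hyperplanes {pi_j A_{i+1} = 0} *)
Definition regcell (i : nat) (tau : 'I_(n i.+1) -> choice3) (x : vec R (n i)) : Prop :=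
  forall j, match tau j with
            | ChGe => 0 <= pre x j
            | ChLe => pre x j <= 0
            | ChEq => pre x j == 0
            end.

Definition isRcell (i : nat) (C : vec R (n i) -> Prop) : Prop :=
  (exists tau, forall x, C x <-> regcell tau x) /\ exists x, C x.

(* canonF k C : C is a cell of C(F_(k)) (k >= 1); with the convention that
   C(F_(0)) = {R^{n 0}}, so that canonF 1 = R^{(1)}.  C(F) = canonF m.+1. *)
Fixpoint canonF (k : nat) (C : vec R (n 0%N) -> Prop) : Prop :=
  match k with
  | 0 => forall x, C x
  | k'.+1 => exists C0 Rc, @canonF k' C0 /\ isRcell Rc /\
      (forall x, C x <-> (C0 x /\ Rc (@Fto k' x))) /\ exists x, C x
  end.

(* The complex C(F^{(s+1)}) of the
   paper (F^{(s+1)} = G o F_m o ... o F_{s+1}) is canonB s (m.+1 - s). *)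
Fixpoint canonB (s t : nat) (C : vec R (n s) -> Prop) : Prop :=
  match t with
  | 0 => forall x, C x
  | t'.+1 => exists C0 (Rc : vec R (n (t' + s)%N) -> Prop),
      @canonB s t' C0 /\ isRcell Rc /\
      (forall x, C x <-> (C0 x /\ Rc (@Ffrom s t' x))) /\ exists x, C x
  end.

(* supertransversality: for 1 <= i <= m (here s = i-1 < m), F_i is transverse
   on cells of R^{(i)} to the interior of every cell of C(F^{(i+1)}) *)
Definition supertransversal : Prop :=
  forall s : nat, (s < m)%N ->
  forall (C : vec R (n s) -> Prop) (D : vec R (n s.+1) -> Prop),
    isRcell C -> @canonB s.+1 (m.+1 - s.+1)%N D ->
    transverse_on (@layer s) C (relint D).

(* sign sequence at x: entry (i+1, j) of the paper is sgn F_{i+1, j}(x) *)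
Definition signseq (x : vec R (n 0%N)) : forall i : 'I_m.+1, 'I_(n i.+1) -> int :=
  fun i j => sgz (@pre i (@Fto i x) j).

Definition sprod (s t : forall i : 'I_m.+1, 'I_(n i.+1) -> int) :
    forall i : 'I_m.+1, 'I_(n i.+1) -> int :=
  fun i j => if s i j != 0 then s i j else t i j.

End Network.

From Pilot Require Import Defs.
From HB Require Import structures.
From mathcomp Require Import all_boot all_order all_algebra.
From mathcomp Require Import reals.
From mathcomp Require Import ring lra.
From Stdlib Require Import FunctionalExtensionality PropExtensionality Eqdep_dec.
Import Order.TTheory GRing.Theory Num.Theory.
Local Open Scope ring_scope.

(* A cell of C(F) is the closed sign cell of any point x of its relative
   interior: the points at which every node vanishes or has its sign at x.  The
   product pattern u = S(x).S(y) agrees with S(x) wherever S(x) is nonzero, so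
   the cell of x is cut out of the closed sign cell E of u by the vanishing of
   an affine function that is nonnegative on E.  It remains to realise u by a
   point, which makes E a cell of C(F) whose relative interior has signs u.
   Such a point is built from x layer by layer: at layer k, F_(k)(w) is moved
   along a direction of the image of the input cell of w that moves the nodes
   of layer k vanishing at w as a move towards F_(k)(y) would, and keeps the
   later layers inside their cells.  Supertransversality provides this
   direction: by induction on k, the directions of the image of the input cell
   of w and of the cell of F_(k)(w) in C(F^(k+1)) together span R^(n_k). *)

Set Implicit Arguments. Unset Strict Implicit. Unset Printing Implicit Defensive.

Section Vectors.
Variable R : realType.
Implicit Types (k : nat) (e t : R).

Definition small k (v : vec R k) e := forall q, `|v q| < e.

Definition affine_on k (S : vec R k -> Prop) (f : vec R k -> R) :=
  exists (a : vec R k) (b : R), forall z, S z -> f z = dotv a z + b.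

Definition closed_sign (s : int) (v : R) := v = 0 \/ sgz v = s.

Lemma dotv0l k (z : vec R k) : dotv (fun _ => 0) z = 0.
Proof. by rewrite /dotv big1 // => l _; rewrite mul0r. Qed.

Lemma dotvDr k (a x y : vec R k) :
  dotv a (fun l => x l + y l) = dotv a x + dotv a y.
Proof. by rewrite /dotv -big_split; apply: eq_bigr => l _; rewrite mulrDr. Qed.

Lemma dotvZr k (a x : vec R k) c : dotv a (fun l => c * x l) = c * dotv a x.
Proof. by rewrite /dotv mulr_sumr; apply: eq_bigr => l _; ring. Qed.

Lemma dotvBr k (a x y : vec R k) :
  dotv a (fun l => x l - y l) = dotv a x - dotv a y.
Proof. by rewrite /dotv -sumrB; apply: eq_bigr => l _; ring. Qed.

Lemma dotvDl k (a1 a2 z : vec R k) :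
  dotv (fun q => a1 q + a2 q) z = dotv a1 z + dotv a2 z.
Proof. by rewrite /dotv -big_split; apply: eq_bigr => q _; rewrite mulrDl. Qed.

Lemma dotvZl k (a z : vec R k) c : dotv (fun q => c * a q) z = c * dotv a z.
Proof. by rewrite /dotv mulr_sumr; apply: eq_bigr => q _; rewrite mulrA. Qed.

Lemma dotvNl k (a z : vec R k) : dotv (fun q => - a q) z = - dotv a z.
Proof. by rewrite /dotv -sumrN; apply: eq_bigr => q _; rewrite mulNr. Qed.

Lemma dotv_sum k p (a : vec R k) (c : 'I_p -> R) (u w : 'I_p -> vec R k) :
  dotv a (fun l => \sum_(i < p) c i * (u i l - w i l)) =
  \sum_(i < p) c i * (dotv a (u i) - dotv a (w i)).
Proof.
rewrite /dotv; under eq_bigr do rewrite mulr_sumr.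
rewrite exchange_big; apply: eq_bigr => i _.
rewrite -sumrB mulr_sumr; apply: eq_bigr => l _; ring.
Qed.

Lemma dotv_affine k b (L : vec R b) (M : 'I_b -> vec R k) (c : vec R b) z :
  dotv L (fun r => dotv (M r) z + c r) =
  dotv (fun q => \sum_(r < b) L r * M r q) z + dotv L c.
Proof.
rewrite dotvDr; congr (_ + _); rewrite /dotv.
under eq_bigr do rewrite mulr_sumr.
rewrite exchange_big; apply: eq_bigr => q _; rewrite mulr_suml.
by apply: eq_bigr => r _; rewrite mulrA.
Qed.

Lemma norm_dotv_le k (a v : vec R k) e :
  small v e -> `|dotv a v| <= e * \sum_(q < k) `|a q|.
Proof.
move=> Hv; rewrite /dotv mulr_sumr.
apply: le_trans (ler_norm_sum _ _ _) _.
apply: ler_sum => q _; rewrite normrM mulrC.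
by apply: ler_wpM2r => //; apply: ltW.
Qed.

Lemma small_le k (v : vec R k) e e' : small v e -> e <= e' -> small v e'.
Proof. by move=> Hv He q; apply: lt_le_trans He. Qed.

Lemma smallZ k (v : vec R k) t t0 e :
  0 < t -> t <= t0 -> (forall q, t0 * `|v q| < e) -> small (fun q => t * v q) e.
Proof.
move=> Ht Htt H q; rewrite normrM gtr0_norm //.
by apply: le_lt_trans (H q); apply: ler_wpM2r.
Qed.

Lemma exists_scale_below (I : finType) (a b : I -> R) :
  (forall i, 0 < a i) -> exists t, 0 < t /\ forall i, t * `|b i| < a i.
Proof.
move=> Ha; set s := \sum_i `|b i| / a i.
have s0 : 0 <= s by apply: sumr_ge0 => i _; apply: divr_ge0 => //; apply: ltW.
exists (1 + s)^-1; split; first by rewrite invr_gt0; lra.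
move=> i; have Hi : `|b i| / a i <= s.
  rewrite /s (bigD1 i) //= lerDl; apply: sumr_ge0 => j _.
  by apply: divr_ge0 => //; apply: ltW.
have Hai := Ha i.
have Hb : `|b i| <= s * a i by rewrite -ler_pdivrMr.
rewrite mulrC ltr_pdivrMr; last lra.
rewrite mulrDr mulr1 [a i * s]mulrC; lra.
Qed.

Lemma exists_scale_below_nonzero (I : finType) (g b : I -> R) :
  exists t, 0 < t /\ forall i, g i != 0 -> t * `|b i| < `|g i|.
Proof.
have gap_gt0 i : 0 < (if g i != 0 then `|g i| else 1).
  by case: ifP => // Hg; rewrite normr_gt0.
have [t [t0 Ht]] := exists_scale_below b gap_gt0.
by exists t; split=> // i Hi; have := Ht i; rewrite Hi.
Qed.

Lemma sgz_add_small (g d : R) : `|d| < `|g| -> sgz (g + d) = sgz g.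
Proof.
move=> H; move: (H); rewrite ltr_norml => /andP [H1 H2].
have [Hg|Hg|Hg] := ltgtP g 0.
- rewrite ltr0_norm // in H1 H2.
  by apply/eqP; rewrite (eqP (_ : sgz g == -1)) ?sgz_cp0 //; lra.
- rewrite gtr0_norm // in H1 H2.
  by apply/eqP; rewrite (eqP (_ : sgz g == 1)) ?sgz_cp0 //; lra.
- by move: H; rewrite Hg normr0 ltNge normr_ge0.
Qed.

Lemma sgz_perturb (I : finType) (g b : I -> R) :
  exists e, 0 < e /\ forall t, 0 < t -> t <= e -> forall i,
    sgz (g i + t * b i) = if g i != 0 then sgz (g i) else sgz (b i).
Proof.
have [e [e0 He]] := exists_scale_below_nonzero g b.
exists e; split=> // t t0 te i; have [->|gi] := eqVneq (g i) 0.
  by rewrite add0r sgzM gtr0_sgz // mul1r.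
apply: sgz_add_small; rewrite normrM gtr0_norm //.
by apply: le_lt_trans (He i gi); apply: ler_wpM2r.
Qed.

Lemma closed_sign_sgz s (v : R) : sgz v = s -> closed_sign s v.
Proof. by right. Qed.

Lemma closed_sign0 (v : R) : closed_sign 0 v -> v = 0.
Proof. by case=> // /eqP; rewrite sgz_eq0 => /eqP. Qed.

Lemma closed_sign_trans s (v0 v : R) :
  closed_sign s v0 -> closed_sign (sgz v0) v -> closed_sign s v.
Proof.
move=> H0 [->|Hv]; first by left.
have [Hv0|Hv0] := eqVneq v0 0.
  by left; apply/eqP; rewrite -sgz_eq0 Hv Hv0 sgz0.
by case: H0 => [/eqP|Hs]; [rewrite (negbTE Hv0) | right; rewrite Hv Hs].
Qed.

Lemma closed_sign_mul_ge0 s (v : R) : closed_sign s v -> 0 <= s%:~R * v.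
Proof.
case=> [->|<-]; first by rewrite mulr0.
by rewrite -sgrEz -normrEsg normr_ge0.
Qed.

Lemma dir_diff k (S : vec R k -> Prop) u w :
  S u -> S w -> dir S (fun j => u j - w j).
Proof.
move=> Su Sw; exists 1%N, (fun _ => 1), (fun _ => u), (fun _ => w); split=> //.
by move=> j; rewrite big_ord1 mul1r.
Qed.

Lemma dir0 k (S : vec R k -> Prop) : dir S (fun _ => 0).
Proof.
exists 0%N, (fun _ => 0), (fun _ _ => 0), (fun _ _ => 0).
by split=> [[]//|j]; rewrite big_ord0.
Qed.

Lemma dirZ k (S : vec R k -> Prop) v c : dir S v -> dir S (fun j => c * v j).
Proof.
move=> [p [a [u [w [Suw Hv]]]]]; exists p, (fun i => c * a i), u, w.
by split=> // j; rewrite Hv mulr_sumr; apply: eq_bigr => i _; ring.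
Qed.

Lemma dirD k (S : vec R k -> Prop) v1 v2 :
  dir S v1 -> dir S v2 -> dir S (fun j => v1 j + v2 j).
Proof.
move=> [p [c [u [w [H1 H2]]]]] [p' [c' [u' [w' [H1' H2']]]]].
pose glue T (f : 'I_p -> T) (f' : 'I_p' -> T) (i : 'I_(p + p')) :=
  match split i with inl a => f a | inr b => f' b end.
exists (p + p')%N, (glue _ c c'), (glue _ u u'), (glue _ w w').
split=> [i|j]; first by rewrite /glue; case: (split i).
rewrite big_split_ord H2 H2' /glue; congr (_ + _); apply: eq_bigr => i _.
  by rewrite -/(unsplit (inl i)) unsplitK.
by rewrite -/(unsplit (inr i)) unsplitK.
Qed.

Lemma dirB k (S : vec R k -> Prop) v1 v2 :
  dir S v1 -> dir S v2 -> dir S (fun j => v1 j - v2 j).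
Proof.
move=> H1 H2; have := dirD H1 (dirZ (-1) H2).
by congr dir; apply: functional_extensionality => j; ring.
Qed.

Lemma dir_subset k (S T : vec R k -> Prop) v :
  (forall z, S z -> T z) -> dir S v -> dir T v.
Proof.
move=> ST [p [c [u [w [Suw Hv]]]]]; exists p, c, u, w; split=> // i.
by have [? ?] := Suw i; split; apply: ST.
Qed.

Lemma dir_relint k (S : vec R k -> Prop) v : dir (relint S) v -> dir S v.
Proof. by apply: dir_subset => z []. Qed.

Lemma dotv_dir_eq0 k (S : vec R k -> Prop) (g : vec R k -> R) a b v :
  (forall z, S z -> g z = dotv a z + b) -> (forall z, S z -> g z = 0) ->
  dir S v -> dotv a v = 0.
Proof.
move=> Hg H0 [p [c [u [w [Suw Hv]]]]].
have -> : v = (fun l => \sum_(i < p) c i * (u i l - w i l)).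
  exact: functional_extensionality.
have Hc z : S z -> dotv a z = - b.
  by move=> Sz; apply/eqP; rewrite -addr_eq0 -Hg // H0.
by rewrite dotv_sum big1 // => i _; have [Su Sw] := Suw i; rewrite !Hc // subrr mulr0.
Qed.

Lemma dir_image k b (S : vec R k -> Prop) (T : vec R b -> Prop)
    (f : vec R k -> vec R b) (M : 'I_b -> vec R k) (c : vec R b) v :
  (forall z, S z -> T (f z)) ->
  (forall z, S z -> forall j, f z j = dotv (M j) z + c j) ->
  dir S v -> dir T (fun j => dotv (M j) v).
Proof.
move=> ST Hf [p [a [u [w [Suw Hv]]]]].
exists p, a, (fun i => f (u i)), (fun i => f (w i)); split.
  by move=> i; have [? ?] := Suw i; split; apply: ST.
move=> j; have -> : v = (fun l => \sum_(i < p) a i * (u i l - w i l)).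
  exact: functional_extensionality.
rewrite dotv_sum; apply: eq_bigr => i _.
by have [? ?] := Suw i; rewrite !Hf //; ring.
Qed.

Lemma dir_image_lift k b (S : vec R k -> Prop) (f : vec R k -> vec R b)
    (M : 'I_b -> vec R k) (c : vec R b) eta :
  (forall z, S z -> forall j, f z j = dotv (M j) z + c j) ->
  dir (fun y => exists z, S z /\ y = f z) eta ->
  exists d, dir S d /\ forall j, eta j = dotv (M j) d.
Proof.
move=> Hf [p [a [u [w [Suw Heta]]]]].
have [u' Hu'] := fin_all_exists (fun i => proj1 (Suw i)).
have [w' Hw'] := fin_all_exists (fun i => proj2 (Suw i)).
exists (fun l => \sum_(i < p) a i * (u' i l - w' i l)); split.
  exists p, a, u', w'; split=> // i.
  by have [? _] := Hu' i; have [? _] := Hw' i.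
move=> j; rewrite Heta dotv_sum; apply: eq_bigr => i _.
have [Su ->] := Hu' i; have [Sw ->] := Hw' i.
by rewrite !Hf //; ring.
Qed.

Lemma affine_on_sum k (S : vec R k -> Prop) (I : Type) (r : seq I)
    (F : I -> vec R k -> R) :
  (forall i, affine_on S (F i)) -> affine_on S (fun z => \sum_(i <- r) F i z).
Proof.
elim: r => [|i r IH] HF.
  by exists (fun _ => 0), 0 => z _; rewrite big_nil dotv0l addr0.
have [a [b H]] := IH HF; have [a1 [b1 H1]] := HF i.
exists (fun q => a1 q + a q), (b1 + b) => z Hz.
by rewrite big_cons H1 // H // dotvDl; ring.
Qed.

Lemma affine_onZ k (S : vec R k -> Prop) f c :
  affine_on S f -> affine_on S (fun z => c * f z).
Proof.
move=> [a [b H]]; exists (fun q => c * a q), (c * b) => z Hz.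
by rewrite H // dotvZl; ring.
Qed.

(* x + t (x - z) stays in S for small t > 0, and there g = - t g z. *)
Lemma relint_affine_eq0 k (S : vec R k -> Prop) (g : vec R k -> R) s x z :
  affine_on S g -> (forall q, S q -> closed_sign s (g q)) ->
  relint S x -> S z -> g x = 0 -> g z = 0.
Proof.
move=> [a [b Hg]] Hs [Sx [eps [e0 He]]] Sz gx0.
apply/eqP; apply: contraT => gz.
have [t [t0 Ht]] := exists_scale_below (fun l => x l - z l) (fun _ : 'I_k => e0).
pose v := fun l => t * (x l - z l).
have Sv : S (fun j => x j + v j).
  by apply: He; [exact: dirZ (dir_diff Sx Sz) | exact: smallZ (lexx t) Ht].
have E : g (fun j => x j + v j) = - t * g z.
  have hx : dotv a x = - b by apply/eqP; rewrite -addr_eq0 -Hg // gx0.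
  by rewrite Hg // dotvDr /v dotvZr dotvBr (Hg z) // hx; ring.
have [/eqP|Hsz] := Hs _ Sz; first by rewrite (negbTE gz).
have [|] := Hs _ Sv; rewrite E.
  by move/eqP; rewrite mulf_eq0 (negbTE gz) orbF oppr_eq0 gt_eqF.
rewrite sgzM sgzN (_ : sgz t = 1); last by apply/eqP; rewrite sgz_cp0.
rewrite -Hsz => /eqP; rewrite mulN1r -subr_eq0 -opprD oppr_eq0 -mulr2n.
by rewrite mulrn_eq0 /= sgz_eq0 (negbTE gz).
Qed.

End Vectors.

Unset Implicit Arguments.

Section Network.
Variables (R : realType) (m : nat) (n : nat -> nat).
Variable W : forall i : nat, 'I_(n i.+1) -> 'I_(n i) -> R.
Variable bias : forall i : nat, 'I_(n i.+1) -> R.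

Local Notation pre := (@pre R n W bias).
Local Notation layer := (@layer R m n W bias).
Local Notation Fto k := (@Fto R m n W bias k).
Local Notation Ffrom s t := (@Ffrom R m n W bias s t).

(* Points of varying layers, so that running the network from layer a for i
   steps needs no cast between R^(n (i + a)) and R^(n (a + i)). *)
Definition point := {p : nat & vec R (n p)}.

Definition step (e : point) : point := existT _ (projT1 e).+1 (layer (projT2 e)).

Definition run a i (z : vec R (n a)) : point := iter i step (existT _ a z).

(* Pre-activation of node l of the layer following e, and 0 for l out of range. *)
Definition node (e : point) (l : nat) : R :=
  match (insub l : option 'I_(n (projT1 e).+1)) with
  | Some j => pre (projT2 e) j
  | None => 0
  end.

(* Sign patterns are indexed by absolute layer and node number. *)
Definition cell a t (sg : nat -> nat -> int) (z : vec R (n a)) : Prop :=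
  forall i, (i < t)%N -> forall l, closed_sign (sg (a + i)%N l) (node (run a i z) l).

Definition exact_signs a t (sg : nat -> nat -> int) (z : vec R (n a)) : Prop :=
  forall i, (i < t)%N -> forall l, sgz (node (run a i z) l) = sg (a + i)%N l.

Definition signs (w : vec R (n 0)) (p l : nat) : int := sgz (node (run 0 p w) l).

Definition sgprod (s s' : nat -> nat -> int) (p l : nat) : int :=
  if s p l != 0 then s p l else s' p l.

Lemma preE p (v : vec R (n p)) j : pre v j = dotv (W p j) v + bias p j.
Proof. by []. Qed.

Lemma run_Fto k w : run 0 k w = existT _ k (Fto k w).
Proof. by elim: k => //= k; rewrite /run /= => ->. Qed.

Lemma run_Ffrom s t h : run s t h = existT _ (t + s)%N (Ffrom s t h).
Proof. by elim: t => //= t; rewrite /run /= => ->. Qed.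

Lemma run_Fto_shift k i w : run k i (Fto k w) = run 0 (k + i) w.
Proof. by rewrite /run addnC iterD -/(run 0 k w) run_Fto. Qed.

Lemma runSr k i q : run k i.+1 q = run k.+1 i (layer q).
Proof. by rewrite /run iterSr. Qed.

Lemma projT1_run a i z : projT1 (run a i z) = (i + a)%N.
Proof. by elim: i => //= i; rewrite /run /= => ->. Qed.

Lemma node_ord p v (j : 'I_(n p.+1)) : node (existT _ p v) (val j) = pre v j.
Proof. by rewrite /node /= valK. Qed.

Lemma node_out e l : (n (projT1 e).+1 <= l)%N -> node e l = 0.
Proof. by move=> H; rewrite /node insubF //; apply/negbTE; rewrite -leqNgt. Qed.

Lemma node_Fto k w (j : 'I_(n k.+1)) : node (run 0 k w) (val j) = pre (Fto k w) j.
Proof. by rewrite run_Fto node_ord. Qed.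

Lemma closed_sign_node p v (tau : nat -> int) :
  (forall l, closed_sign (tau l) (node (existT _ p v) l)) <->
  (forall j : 'I_(n p.+1), closed_sign (tau (val j)) (pre v j)).
Proof.
split=> H; first by move=> j; rewrite -node_ord.
move=> l; have [Hl|Hl] := ltnP l (n p.+1).
  by have := H (Ordinal Hl); rewrite -node_ord.
by rewrite node_out //; left.
Qed.

Lemma exact_signs_cell a t sg z : exact_signs a t sg z -> cell a t sg z.
Proof. by move=> Hz i Hi l; apply: closed_sign_sgz; apply: Hz. Qed.

Lemma exact_signs_Fto k t w : exact_signs k t (signs w) (Fto k w).
Proof. by move=> i _ l; rewrite run_Fto_shift. Qed.

Lemma cellS a t sg z :
  cell a t.+1 sg z <->
  cell a t sg z /\ forall l, closed_sign (sg (a + t)%N l) (node (run a t z) l).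
Proof.
split=> [H|[H1 H2] i]; first by split=> [i Hi|]; apply: H; rewrite // ltnW.
by rewrite ltnS leq_eqVlt => /orP [/eqP -> //|]; apply: H1.
Qed.

Lemma cell_le a t t' sg z : (t' <= t)%N -> cell a t sg z -> cell a t' sg z.
Proof. by move=> Ht H i Hi; apply: H; apply: leq_trans Ht. Qed.

Lemma cell1 k sg x :
  cell k 1 sg x <-> forall j : 'I_(n k.+1), closed_sign (sg k (val j)) (pre x j).
Proof.
rewrite -closed_sign_node; split=> [H l|H i].
  by have := H 0%N erefl l; rewrite addn0.
by rewrite ltnS leqn0 => /eqP -> l; rewrite addn0.
Qed.

Lemma cell_layer k t sg z : cell k t.+1 sg z -> cell k.+1 t sg (layer z).
Proof. by move=> H i Hi l; have := H i.+1 Hi l; rewrite runSr addSnnS. Qed.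

(* The affine piece of layer p on the region of sign pattern tau; layer m is the
   output layer G, without ReLU. *)
Definition piece_weight p (tau : nat -> int) : 'I_(n p.+1) -> vec R (n p) :=
  fun j => if (p < m)%N && (tau (val j) != 1) then (fun _ => 0) else W p j.

Definition piece_bias p (tau : nat -> int) : vec R (n p.+1) :=
  fun j => if (p < m)%N && (tau (val j) != 1) then 0 else bias p j.

Lemma layer_piece p tau (v : vec R (n p)) :
  (forall j : 'I_(n p.+1), closed_sign (tau (val j)) (pre v j)) ->
  forall j, layer v j = dotv (piece_weight p tau j) v + piece_bias p tau j.
Proof.
move=> H j; rewrite /Defs.layer /piece_weight /piece_bias.
case: ltnP => Hp /=; last by [].
have := H j; have [-> | Ht] /= := eqVneq (tau (val j)) 1 => Hc.
  by rewrite max_l //; case: Hc => [-> //| Hs]; rewrite -sgz_ge0 Hs.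
rewrite max_r; first by rewrite dotv0l addr0.
case: Hc => [-> //| Hs]; rewrite leNgt; apply: contraNN Ht => Hn.
by rewrite -Hs sgz_cp0.
Qed.

Lemma layer_shift p tau (h d : vec R (n p)) :
  (forall j : 'I_(n p.+1), closed_sign (tau (val j)) (pre h j)) ->
  (forall j : 'I_(n p.+1), closed_sign (tau (val j)) (pre (fun q => h q + d q) j)) ->
  forall j, layer (fun q => h q + d q) j = layer h j + dotv (piece_weight p tau j) d.
Proof.
move=> Hh Hhd j; rewrite !(layer_piece _ tau) // dotvDr; ring.
Qed.

Lemma run_affine_on_cell a i sg :
  exists (M : 'I_(n (i + a)) -> vec R (n a)) (c : vec R (n (i + a))),
    forall z, cell a i sg z ->
      run a i z = existT _ (i + a)%N (fun j => dotv (M j) z + c j).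
Proof.
elim: i => [|i [M [c IH]]].
  exists (fun j q => (j == q :> nat)%:R), (fun _ => 0) => z _.
  congr existT; apply: functional_extensionality => j.
  rewrite addr0 /dotv (bigD1 j) //= eqxx mul1r big1 ?addr0 // => q Hq.
  rewrite (_ : (j == q :> nat) = false) ?mul0r //.
  by apply/negbTE; rewrite eq_sym; exact: Hq.
pose tau := sg (a + i)%N.
exists (fun j q => \sum_(r < n (i + a)) piece_weight (i + a) tau j r * M r q).
exists (fun j => dotv (piece_weight (i + a) tau j) c + piece_bias (i + a) tau j).
move=> z /cellS [Hz Hl]; rewrite /run iterS -/(run a i z) IH //=; congr existT.
apply: functional_extensionality => j.
rewrite (layer_piece _ tau) ?dotv_affine ?addrA //.
by move=> jj; have := Hl (val jj); rewrite IH // node_ord.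
Qed.

Lemma node_affine_on_cell a i sg :
  exists (al : nat -> vec R (n a)) (be : nat -> R),
    forall z, cell a i sg z -> forall l, node (run a i z) l = dotv (al l) z + be l.
Proof.
have [M [c H]] := run_affine_on_cell a i sg.
exists (fun l => match (insub l : option 'I_(n (i + a).+1)) with
         | Some j => fun q => \sum_(r < n (i + a)) W (i + a) j r * M r q
         | None => fun _ => 0 end).
exists (fun l => match (insub l : option 'I_(n (i + a).+1)) with
         | Some j => dotv (W (i + a) j) c + bias (i + a) j
         | None => 0 end).
move=> z Hz l; rewrite H // /node /=.
case: (insub l) => [j|]; last by rewrite dotv0l addr0.
by rewrite /Defs.pre -/(dotv (W (i + a) j) _) dotv_affine addrA.
Qed.

Lemma Fto_affine_on_cell k sg : exists (M : 'I_(n k) -> vec R (n 0)) (c : vec R (n k)),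
  forall z, cell 0 k sg z -> forall j, Fto k z j = dotv (M j) z + c j.
Proof.
have := run_affine_on_cell 0 k sg; rewrite addn0 => -[M [c H]].
exists M, c => z /H; rewrite run_Fto.
by move=> /(inj_pair2_eq_dec _ (@eq_comparable nat) (fun p => vec R (n p))) ->.
Qed.

(* Along directions of the cell, nodes vanishing at w stay zero (they vanish on
   the whole cell) and the others move by less than their distance to zero. *)
Lemma cell_sign_stable a t sg w :
  exact_signs a t sg w ->
  exists eps, 0 < eps /\ forall v, dir (cell a t sg) v -> small v eps ->
    exact_signs a t sg (fun q => w q + v q).
Proof.
elim: t => [_|t IH Hw]; first by exists 1; split=> // v _ _ i.
have Hwt : exact_signs a t sg w by move=> i Hi; apply: Hw; rewrite ltnW.
have [eps0 [e0 H0]] := IH Hwt.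
have [al [be Hab]] := node_affine_on_cell a t sg.
pose g l := node (run a t w) l.
have [eps1 [e1 H1]] := exists_scale_below_nonzero (fun j : 'I_(n (t + a).+1) => g j)
  (fun j => \sum_(q < n a) `|al (val j) q|).
exists (Num.min eps0 eps1); split; first by rewrite lt_min e0 e1.
move=> v Dv Sv.
have Dvt : dir (cell a t sg) v := dir_subset (cell_le a t.+1 t sg ^~ (leqnSn t)) Dv.
have Hwv : exact_signs a t sg (fun q => w q + v q).
  by apply: H0 => //; apply: small_le Sv _; rewrite ge_min lexx.
move=> i; rewrite ltnS leq_eqVlt => /orP [/eqP -> l | Hi]; last exact: Hwv.
rewrite (Hab _ (exact_signs_cell _ _ _ _ Hwv)) dotvDr addrAC -Hab; last first.
  exact: exact_signs_cell.
rewrite -(Hw t (ltnSn t) l) -/(g l).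
have [Hg0|Hg0] := eqVneq (g l) 0.
  rewrite Hg0 add0r; congr sgz.
  apply: (dotv_dir_eq0 (S := cell a t.+1 sg) (g := fun z => node (run a t z) l) _ _ Dv).
    by move=> z /(cell_le a t.+1 t sg z (leqnSn t)) /Hab.
  move=> z /cellS [_ /(_ l)]; rewrite -(Hw t (ltnSn t) l) -/(g l) Hg0 sgz0.
  exact: closed_sign0.
apply: sgz_add_small.
have [Hl|Hl] := ltnP l (n (t + a).+1); last first.
  by move: Hg0; rewrite /g node_out ?eqxx // projT1_run.
have := H1 (Ordinal Hl) Hg0; rewrite ger0_norm; last first.
  by apply: sumr_ge0 => q _; apply: normr_ge0.
apply: le_lt_trans; apply: norm_dotv_le; apply: small_le Sv _.
by rewrite ge_min lexx orbT.
Qed.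

Lemma relint_cell a t sg w : exact_signs a t sg w -> relint (cell a t sg) w.
Proof.
move=> Hw; split; first exact: exact_signs_cell.
have [eps [e0 He]] := cell_sign_stable a t sg w Hw.
by exists eps; split=> // v Dv Sv; apply: exact_signs_cell; apply: He.
Qed.

Local Notation regcell p := (@regcell R n W bias p).
Local Notation canonF k := (@canonF R m n W bias k).
Local Notation canonB s t := (@canonB R m n W bias s t).

Definition choice_of_sign (s : int) : choice3 :=
  if s == 1 then ChGe else if s == -1 then ChLe else ChEq.

Definition sign_of_choice (c : choice3) : int :=
  match c with ChGe => 1 | ChLe => -1 | ChEq => 0 end.

Lemma sign_of_choiceK : cancel sign_of_choice choice_of_sign.
Proof. by case. Qed.

Lemma choice_of_signP s (x : R) :
  is_true (match choice_of_sign s with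
           ChGe => 0 <= x | ChLe => x <= 0 | ChEq => x == 0 end)
  <-> closed_sign s x.
Proof.
rewrite /choice_of_sign; have [->|H1] := eqVneq s 1; last have [->|H2] := eqVneq s (-1).
- split=> [|[->//|Hs]]; last by rewrite -sgz_ge0 Hs.
  by rewrite le_eqVlt => /orP [/eqP <-|Hx]; [left | right; apply/eqP; rewrite sgz_cp0].
- split=> [|[->//|Hs]]; last by rewrite -sgz_le0 Hs.
  by rewrite le_eqVlt => /orP [/eqP ->|Hx]; [left | right; apply/eqP; rewrite sgz_cp0].
- split=> [/eqP ->|[->//|Hs]]; first by left.
  have [Hx|Hx|/eqP //] := ltgtP x 0.
    by case/eqP: H2; rewrite -Hs; apply/eqP; rewrite sgz_cp0.
  by case/eqP: H1; rewrite -Hs; apply/eqP; rewrite sgz_cp0.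
Qed.

Lemma regcell_closed_sign p (tau : nat -> int) v :
  regcell p (fun j => choice_of_sign (tau (val j))) v <->
  forall j : 'I_(n p.+1), closed_sign (tau (val j)) (pre v j).
Proof.
split=> H j; first exact: (choice_of_signP _ _).1 (H j).
exact: (choice_of_signP _ _).2 (H j).
Qed.

Lemma cellS_regcell a t sg z :
  cell a t.+1 sg z <-> cell a t sg z /\
    regcell (t + a) (fun j => choice_of_sign (sg (a + t)%N (val j))) (Ffrom a t z).
Proof.
rewrite cellS regcell_closed_sign -closed_sign_node -run_Ffrom.
by split=> -[H1 H2].
Qed.

Lemma cellS_regcell_Fto t sg z :
  cell 0 t.+1 sg z <-> cell 0 t sg z /\
    regcell t (fun j => choice_of_sign (sg t (val j))) (Fto t z).
Proof.
rewrite cellS regcell_closed_sign -closed_sign_node -run_Fto.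
by split=> -[H1 H2].
Qed.

Lemma isRcell_regcell p tau x :
  regcell p tau x -> @isRcell R n W bias p (regcell p tau).
Proof. by move=> Hx; split; [exists tau | exists x]. Qed.

Lemma canonB_cell s t sg h : cell s t sg h -> canonB s t (cell s t sg).
Proof.
elim: t h => [|t IH] h Hh /=; first by move=> x i.
have /cellS_regcell [Ht HR] := Hh.
exists (cell s t sg).
exists (regcell (t + s) (fun j => choice_of_sign (sg (s + t)%N (val j)))).
split; first exact: IH Ht.
split; first exact: isRcell_regcell HR.
by split; [move=> x; apply: cellS_regcell | exists h].
Qed.

Lemma canonF_cell k sg z : cell 0 k sg z -> canonF k (cell 0 k sg).
Proof.
elim: k z => [|k IH] z Hz /=; first by move=> x i.
have /cellS_regcell_Fto [Hk HR] := Hz.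
exists (cell 0 k sg), (regcell k (fun j => choice_of_sign (sg k (val j)))).
split; first exact: IH Hk.
split; first exact: isRcell_regcell HR.
by split; [move=> x; apply: cellS_regcell_Fto | exists z].
Qed.

Lemma canonF_cell_pattern k C :
  canonF k C -> exists sg, forall z, C z <-> cell 0 k sg z.
Proof.
elim: k C => [|k IH] C /=.
  by move=> HC; exists (fun _ _ => 0) => z; split=> // _; apply: HC.
move=> [C0 [Rc [HC0 [[[tau Htau] _] [HC _]]]]].
have [sg Hsg] := IH C0 HC0.
pose tau' l :=
  if (insub l : option 'I_(n k.+1)) is Some j then sign_of_choice (tau j) else 0.
have Htau' : (fun j : 'I_(n k.+1) => choice_of_sign (tau' (val j))) = tau.
  by apply: functional_extensionality => j; rewrite /tau' valK sign_of_choiceK.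
exists (fun p l => if p == k then tau' l else sg p l) => z.
have Elow y :
    cell 0 k (fun p l => if p == k then tau' l else sg p l) y <-> cell 0 k sg y.
  by split=> H i Hi l; have := H i Hi l; rewrite /= (ltn_eqF Hi).
by rewrite cellS_regcell_Fto eqxx Htau' HC Hsg Htau Elow.
Qed.

Definition agree_on_support (tau s : nat -> int) := forall l, s l != 0 -> tau l = s l.

Lemma closed_sign_agree tau s l (v : R) :
  agree_on_support tau s -> closed_sign (s l) v -> closed_sign (tau l) v.
Proof.
move=> Hts; have [->|/Hts ->//] := eqVneq (s l) 0.
by move=> /closed_sign0 ->; left.
Qed.

Lemma layer_on_cell1 k sg tau x :
  agree_on_support tau (sg k) -> cell k 1 sg x ->
  forall j, layer x j = dotv (piece_weight k tau j) x + piece_bias k tau j.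
Proof.
move=> Hts /cell1 Hx; apply: layer_piece => j.
exact: closed_sign_agree Hts (Hx j).
Qed.

Lemma isRcell_cell1 k sg x : cell k 1 sg x -> @isRcell R n W bias k (cell k 1 sg).
Proof.
move=> Hx; split; last by exists x.
exists (fun j => choice_of_sign (sg k (val j))) => z.
by rewrite cell1 regcell_closed_sign.
Qed.

Lemma dotv_dir_cell1_eq0 k sg (j : 'I_(n k.+1)) q :
  sg k (val j) = 0 -> dir (cell k 1 sg) q -> dotv (W k j) q = 0.
Proof.
move=> Hj; apply: (dotv_dir_eq0 (g := fun z => pre z j) (b := bias k j)) => //.
by move=> z /cell1 /(_ j); rewrite Hj => /closed_sign0.
Qed.

(* The image under F_(k) of the closed cell of w in C(F_(k)), and the cell of
   F_(k)(w) in C(F^(k+1)). *)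
Definition img_cell k w : vec R (n k) -> Prop :=
  fun y => exists z, cell 0 k (signs w) z /\ y = Fto k z.

Definition fwd_cell k w : vec R (n k) -> Prop := cell k (m.+1 - k) (signs w).

Lemma fwd_cell_cell1 k w z : (k <= m)%N -> fwd_cell k w z -> cell k 1 (signs w) z.
Proof. by move=> Hk; apply: cell_le; rewrite subn_gt0 ltnS. Qed.

Lemma dir_fwd_cell_layer k w tau p :
  (k < m)%N -> agree_on_support tau (signs w k) -> dir (fwd_cell k w) p ->
  dir (fwd_cell k.+1 w) (fun j => dotv (piece_weight k tau j) p).
Proof.
move=> Hk Hts.
have Hmap z : fwd_cell k w z -> fwd_cell k.+1 w (layer z).
  by rewrite /fwd_cell subSS subSn; [apply: cell_layer | apply: ltnW].
have Haff z : fwd_cell k w z ->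
    forall j, layer z j = dotv (piece_weight k tau j) z + piece_bias k tau j.
  by move=> /(fwd_cell_cell1 _ _ _ (ltnW Hk)); apply: layer_on_cell1.
exact: dir_image Hmap Haff.
Qed.

Lemma img_cell_perturb k w eta : dir (img_cell k w) eta ->
  exists e, 0 < e /\ forall t, 0 < t -> t <= e -> exists w',
    exact_signs 0 k (signs w) w' /\ forall j, Fto k w' j = Fto k w j + t * eta j.
Proof.
move=> Deta; have [M [c HM]] := Fto_affine_on_cell k (signs w).
have [del [Ddel Hdel]] := dir_image_lift HM Deta.
have Hw : exact_signs 0 k (signs w) w by [].
have [eps [e0 Hstab]] := cell_sign_stable 0 k (signs w) w Hw.
have [e [ee He]] := exists_scale_below del (fun _ : 'I_(n 0) => e0).
exists e; split=> // t t0 te; exists (fun q => w q + t * del q).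
have Hw' := Hstab _ (dirZ t Ddel) (smallZ t0 te He); split=> // j.
rewrite !HM; [|exact: exact_signs_cell Hw|exact: exact_signs_cell Hw'].
by rewrite dotvDr dotvZr Hdel; ring.
Qed.

(* A direction of the image that is also a direction of the layer-k region
   is realised by a small move of w, along which layer k acts linearly. *)
Lemma dir_img_cellS k w v :
  dir (img_cell k w) v -> dir (cell k 1 (signs w)) v ->
  dir (img_cell k.+1 w) (fun j => dotv (piece_weight k (signs w k) j) v).
Proof.
move=> Dv Dv1; set h := Fto k w.
have [e [e0 He]] := img_cell_perturb k w v Dv.
have [epsC [eC HC]] := cell_sign_stable k 1 (signs w) h (exact_signs_Fto k 1 w).
have [t1 [t10 Ht1]] := exists_scale_below v (fun _ : 'I_(n k) => eC).
pose t := Num.min e t1.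
have t0 : 0 < t by rewrite lt_min e0 t10.
have te : t <= e by rewrite ge_min lexx.
have tt1 : t <= t1 by rewrite ge_min lexx orbT.
have [w' [Ew' Hw']] := He t t0 te.
have Ch' : cell k 1 (signs w) (fun j => h j + t * v j).
  by apply: exact_signs_cell; apply: HC (dirZ t Dv1) (smallZ t0 tt1 Ht1).
have Ch : cell k 1 (signs w) h by exact/exact_signs_cell/exact_signs_Fto.
have Fw' : Fto k w' = (fun j => h j + t * v j) by exact: functional_extensionality.
have img_pt z : cell 0 k (signs w) z -> cell k 1 (signs w) (Fto k z) ->
    img_cell k.+1 w (Fto k.+1 z).
  move=> Hz Hz1; exists z; split=> //; apply/cellS; split=> // l.
  by rewrite run_Fto; move: Hz1 => /cell1 /closed_sign_node.
have Ch'w : cell k 1 (signs w) (Fto k w') by rewrite Fw'.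
have := dirZ t^-1 (dir_diff (img_pt w' (exact_signs_cell _ _ _ _ Ew') Ch'w)
                            (img_pt w (fun i _ l => or_intror erefl) Ch)).
congr dir; apply: functional_extensionality => j /=; rewrite Fw'.
have /cell1 Hh := Ch; have /cell1 Hh' := Ch'.
rewrite -/h (layer_shift k (signs w k) h (fun q => t * v q)) // dotvZr.
by field; rewrite gt_eqF.
Qed.

Lemma fwd_cell_perturb k w v : dir (fwd_cell k w) v ->
  exists e, 0 < e /\ forall t z, 0 < t -> t <= e ->
    (forall j, Fto k z j = Fto k w j + t * v j) ->
    forall p l, (k <= p)%N -> (p <= m)%N -> signs z p l = signs w p l.
Proof.
move=> Dv; have [eps [e0 Hstab]] :=
  cell_sign_stable k (m.+1 - k) (signs w) (Fto k w) (exact_signs_Fto _ _ w).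
have [e [ee He]] := exists_scale_below v (fun _ : 'I_(n k) => e0).
exists e; split=> // t z t0 te Hz p l Hkp Hpm.
have Fz : Fto k z = (fun j => Fto k w j + t * v j) by exact: functional_extensionality.
rewrite -(subnKC Hkp) /signs -run_Fto_shift Fz.
rewrite (Hstab _ (dirZ t Dv) (smallZ t0 te He)) //.
by rewrite ltn_sub2r // ltnS (leq_trans Hkp).
Qed.

Lemma cell_relint_signs k sg x :
  relint (cell 0 k sg) x -> forall z, cell 0 k sg z <-> cell 0 k (signs x) z.
Proof.
move=> rx z; have Cx := proj1 rx; split=> Cz i Hi l; last first.
  exact: closed_sign_trans (Cx i Hi l) (Cz i Hi l).
have [Hx0|Hx0] := eqVneq (node (run 0 i x) l) 0.
  have Haff : affine_on (cell 0 k sg) (fun q => node (run 0 i q) l).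
    have [al [be H]] := node_affine_on_cell 0 i sg.
    by exists (al l), (be l) => q /(cell_le 0 k i sg q (ltnW Hi)) /H.
  have Hcs q : cell 0 k sg q -> closed_sign (sg i l) (node (run 0 i q) l).
    by move=> Cq; apply: Cq.
  by left; apply: relint_affine_eq0 Haff Hcs rx Cz Hx0.
case: (Cx i Hi l) => [/eqP|Hs]; first by rewrite (negbTE Hx0).
by rewrite /signs Hs; apply: Cz.
Qed.

Lemma canonF_relint_cell k C x :
  canonF k C -> relint C x -> C = cell 0 k (signs x).
Proof.
move=> /canonF_cell_pattern [sg Hsg].
have -> : C = cell 0 k sg.
  by apply: functional_extensionality => z; apply: propositional_extensionality.
move=> rx; apply: functional_extensionality => z; apply: propositional_extensionality.
exact: cell_relint_signs.
Qed.

Lemma relint_cell_exact k sg z z0 :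
  relint (cell 0 k sg) z -> exact_signs 0 k sg z0 -> exact_signs 0 k sg z.
Proof.
move=> rz Ez0 i Hi l.
have Cz0 := (cell_relint_signs k sg z rz z0).1 (exact_signs_cell _ _ _ _ Ez0).
have [H0|H0] := eqVneq (node (run 0 i z0) l) 0.
  have := proj1 rz i Hi l; rewrite -(Ez0 i Hi l) H0 sgz0 => /closed_sign0 ->.
  by rewrite sgz0.
by case: (Cz0 i Hi l) => [/eqP|Hs]; [rewrite (negbTE H0) | rewrite -(Ez0 i Hi l) Hs].
Qed.

Lemma cell_agree_zero k sg sg' z : (forall p, agree_on_support (sg' p) (sg p)) ->
  cell 0 k sg z <-> cell 0 k sg' z /\
    forall (i : 'I_k) (j : 'I_(n i.+1)), sg i j = 0 -> node (run 0 i z) j = 0.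
Proof.
move=> Hag; split=> [Cz|[Cz Hz0] i Hi l].
  split=> [i Hi l|i j Hs]; first exact: closed_sign_agree (Hag i) (Cz i Hi l).
  by apply: closed_sign0; rewrite -Hs; apply: Cz.
have [Hl|Hl] := ltnP l (n i.+1); last by left; rewrite node_out // projT1_run addn0.
have [Hs|Hs] := eqVneq (sg i l) 0.
  by rewrite Hs; left; apply: (Hz0 (Ordinal Hi) (Ordinal Hl)).
by rewrite -(Hag i l Hs); apply: Cz.
Qed.

(* C is cut out of E by the vanishing of the nonnegative affine function
   sum of sg' * node over the nodes with sg = 0. *)
Lemma face_le_cell k sg sg' :
  (forall p, agree_on_support (sg' p) (sg p)) -> face_le (cell 0 k sg) (cell 0 k sg').
Proof.
move=> Hag.
pose term z (i : 'I_k) (j : 'I_(n i.+1)) :=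
  if sg i j == 0 then (sg' i j)%:~R * node (run 0 i z) j else 0.
pose phi z := \sum_(i < k) \sum_(j < n i.+1) term z i j.
have term_ge0 z i j : cell 0 k sg' z -> 0 <= term z i j.
  by move=> Hz; rewrite /term; case: eqP => // _; apply: closed_sign_mul_ge0; apply: Hz.
have term0P z i j : cell 0 k sg' z ->
    term z i j = 0 <-> (sg i j = 0 -> node (run 0 i z) j = 0).
  move=> Hz; rewrite /term; case: eqP => [Hs|Hs]; last by split=> // _ /Hs.
  split=> [|/(_ Hs) ->]; last by rewrite mulr0.
  move=> /eqP; rewrite mulf_eq0 intr_eq0 => /orP [/eqP Hs'|/eqP -> //] _.
  by have := Hz i (ltn_ord i) j; rewrite Hs' => /closed_sign0.
have phi0P z : cell 0 k sg' z -> phi z = 0 <-> forall i j, term z i j = 0.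
  move=> Hz; split=> [H i j|H]; last by rewrite /phi big1 // => i _; rewrite big1.
  have row_ge0 (r : 'I_k) : 0 <= \sum_(q < n r.+1) term z r q.
    by apply: sumr_ge0 => q _; apply: term_ge0.
  have Hrow := psumr_eq0P (fun r _ => row_ge0 r) H (i := i) isT.
  exact: (psumr_eq0P (fun q _ => term_ge0 z i q Hz) Hrow (i := j) isT).
have [a [b Hphi]] : affine_on (cell 0 k sg') phi.
  apply: affine_on_sum => i; apply: affine_on_sum => j; rewrite /term.
  case: eqP => _; last by exists (fun _ => 0), 0 => z _; rewrite dotv0l addr0.
  apply: affine_onZ; have [al [be H]] := node_affine_on_cell 0 i sg'.
  by exists (al j), (be j) => z /(cell_le 0 k i sg' z (ltnW (ltn_ord i))) /H.
exists (fun q => - a q), b; split.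
  move=> z Hz; rewrite dotvNl; have := Hphi z Hz.
  have : 0 <= phi z by apply: sumr_ge0 => i _; apply: sumr_ge0 => j _; apply: term_ge0.
  lra.
move=> z; rewrite cell_agree_zero //; split=> [[Hz H0]|[Hz Hb]]; split=> //.
  have : phi z = 0 by apply/(phi0P z Hz) => i j; apply/(term0P z i j Hz)/H0.
  by rewrite Hphi // dotvNl; lra.
have /(phi0P z Hz) H : phi z = 0 by rewrite Hphi //; rewrite dotvNl in Hb; lra.
by move=> i j; apply/(term0P z i j Hz).
Qed.

Lemma signseqE w (i : 'I_m.+1) (j : 'I_(n i.+1)) :
  @signseq R m n W bias w i j = signs w i (val j).
Proof. by rewrite /signs node_Fto. Qed.

Section Supertransversal.
Hypothesis Hst : @supertransversal R m n W bias.

Lemma supertransversal_split k w tau r :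
  (k < m)%N -> agree_on_support tau (signs w k) ->
  exists a d, dir (cell k 1 (signs w)) a /\ dir (fwd_cell k.+1 w) d /\
    forall j, r j = dotv (piece_weight k tau j) a + d j.
Proof.
move=> Hk Hts.
have Eh := exact_signs_Fto k 1 w.
have Eh1 := exact_signs_Fto k.+1 (m.+1 - k.+1) w.
have HT := Hst k Hk (cell k 1 (signs w)) (fwd_cell k.+1 w)
  (isRcell_cell1 _ _ _ (exact_signs_cell _ _ _ _ Eh))
  (canonB_cell _ _ _ _ (exact_signs_cell _ _ _ _ Eh1)).
have [a [d [Da [Dd Hr]]]] := HT (fun j l => piece_weight k tau j l) (piece_bias k tau)
  (fun z Hz => layer_on_cell1 _ _ _ _ Hts (proj1 Hz))
  (Fto k w) (relint_cell _ _ _ _ Eh) (relint_cell _ _ _ _ Eh1) r.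
by exists a, d; split; [exact: dir_relint | split; first exact: dir_relint].
Qed.

(* The transversality of F_(k+1) to the cell of layer k+1 propagates, by
   induction on k, to the image of the whole input cell. *)
Lemma img_fwd_dir_span k w r : (k <= m)%N ->
  exists v p, dir (img_cell k w) v /\ dir (fwd_cell k w) p /\
    forall j, r j = v j + p j.
Proof.
elim: k r => [|k IH] r Hk.
  have img_all y : img_cell 0 w y by exists y.
  exists r, (fun _ => 0); split; last by split; [exact: dir0 | move=> j; rewrite addr0].
  have := dir_diff (img_all r) (img_all (fun _ => 0)).
  by congr dir; apply: functional_extensionality => j; rewrite subr0.
have [a [d [Da [Dd Hr]]]] :=
  supertransversal_split k w (signs w k) r Hk (fun l _ => erefl).
have [v0 [p0 [Dv0 [Dp0 Ha]]]] := IH a (ltnW Hk).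
have Dp0C := dir_subset (fwd_cell_cell1 k w ^~ (ltnW Hk)) Dp0.
have Dv0C : dir (cell k 1 (signs w)) v0.
  have -> : v0 = (fun j => a j - p0 j).
    by apply: functional_extensionality => j; rewrite Ha; ring.
  exact: dirB.
exists (fun j => dotv (piece_weight k (signs w k) j) v0).
exists (fun j => dotv (piece_weight k (signs w k) j) p0 + d j).
split; first exact: dir_img_cellS.
split; first by apply: dirD Dd; apply: dir_fwd_cell_layer.
move=> j; rewrite Hr addrA -dotvDr; congr (dotv _ _ + _).
exact: functional_extensionality.
Qed.

(* Start from the image part of r, which moves the nodes vanishing at w as r
   does; supertransversality corrects it, without moving these nodes, so that
   layer k maps it to a direction of the later cells. *)
Lemma zero_node_direction k w tau r :
  (k <= m)%N -> agree_on_support tau (signs w k) ->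
  exists eta, dir (img_cell k w) eta /\
    (forall j : 'I_(n k.+1),
       signs w k (val j) = 0 -> dotv (W k j) eta = dotv (W k j) r) /\
    ((k < m)%N -> dir (fwd_cell k.+1 w) (fun j => dotv (piece_weight k tau j) eta)).
Proof.
move=> Hk Hts.
have kill j q : signs w k (val j) = 0 -> dir (fwd_cell k w) q -> dotv (W k j) q = 0.
  by move=> Hj /(dir_subset (fwd_cell_cell1 k w ^~ Hk)); apply: dotv_dir_cell1_eq0.
have [m0 [p0 [Dm0 [Dp0 Hr]]]] := img_fwd_dir_span k w r Hk.
have Wm0 j : signs w k (val j) = 0 -> dotv (W k j) m0 = dotv (W k j) r.
  move=> Hj; have -> : r = (fun q => m0 q + p0 q) by exact: functional_extensionality.
  by rewrite dotvDr (kill j p0) ?addr0.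
have [Hkm|Hkm] := ltnP k m; last first.
  by exists m0; split=> //; split=> // H; rewrite ltnNge Hkm in H.
have [a [d [Da [Dd Hm0]]]] :=
  supertransversal_split k w tau (fun j => dotv (piece_weight k tau j) m0) Hkm Hts.
have [ma [pa [Dma [Dpa Ha]]]] := img_fwd_dir_span k w a Hk.
have Ema : ma = (fun q => a q - pa q).
  by apply: functional_extensionality => q; rewrite Ha; ring.
exists (fun q => m0 q - ma q); split; first exact: dirB.
split=> [j Hj|_].
  rewrite dotvBr Wm0 // Ema dotvBr (dotv_dir_cell1_eq0 _ _ _ _ Hj Da).
  by rewrite (kill j pa) // !subr0.
have := dirD Dd (dir_fwd_cell_layer k w tau pa Hkm Hts Dpa).
congr dir; apply: functional_extensionality => j.
by rewrite dotvBr Ema dotvBr Hm0; ring.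
Qed.

Section Product.
Variables x y : vec R (n 0).
Local Notation u := (sgprod (signs x) (signs y)).

Definition product_upto k w :=
  exact_signs 0 k u w /\
  forall p l, (k <= p)%N -> (p <= m)%N -> signs w p l = signs x p l.

(* Push F_(k) w towards F_(k) y: the nodes of layer k that vanish at w take
   the signs of y, the others and all earlier and later layers keep theirs. *)
Lemma product_uptoS k w :
  (k <= m)%N -> product_upto k w -> exists w', product_upto k.+1 w'.
Proof.
move=> Hk [Hlow Hhigh]; set h := Fto k w; pose L := piece_weight k (u k).
have Hsk l : signs w k l = signs x k l := Hhigh k l (leqnn k) Hk.
have Hts : agree_on_support (u k) (signs w k).
  by move=> l; rewrite Hsk /sgprod => ->.
have [eta [Deta [Weta Feta]]] :=
  zero_node_direction k w (u k) (fun j => Fto k y j - h j) Hk Hts.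
have Weta' j : signs w k (val j) = 0 -> dotv (W k j) eta = pre (Fto k y) j.
  move=> Hj; have /eqP : sgz (pre h j) = 0 by rewrite -node_Fto.
  by rewrite Weta // dotvBr sgz_eq0 !preE => /eqP; lra.
have [e1 [e10 He1]] := img_cell_perturb k w eta Deta.
have [e2 [e20 He2]] : exists e2, 0 < e2 /\ forall t z, 0 < t -> t <= e2 ->
    (forall j, Fto k.+1 z j = Fto k.+1 w j + t * dotv (L j) eta) ->
    forall p l, (k.+1 <= p)%N -> (p <= m)%N -> signs z p l = signs w p l.
  have [Hkm|Hkm] := ltnP k m; first exact: fwd_cell_perturb (Feta Hkm).
  by exists 1; split=> // t z _ _ _ p l /leq_trans Hp /Hp; rewrite ltnNge Hkm.
have [e3 [e30 He3]] := sgz_perturb (fun j => pre h j) (fun j => dotv (W k j) eta).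
pose t := Num.min e1 (Num.min e2 e3).
have t0 : 0 < t by rewrite !lt_min e10 e20 e30.
have te1 : t <= e1 by rewrite ge_min lexx.
have [w' [Ew' /functional_extensionality Fw']] := He1 t t0 te1.
have Sk j : sgz (pre (Fto k w') j) = u k (val j).
  have Hhj : signs w k (val j) = sgz (pre h j) by rewrite /signs node_Fto.
  rewrite !preE Fw' dotvDr dotvZr addrAC -preE He3 //; last first.
    by rewrite !ge_min lexx !orbT.
  rewrite /sgprod -Hsk Hhj sgz_eq0; case: eqP => // Hh0.
  by rewrite Weta' ?Hhj ?Hh0 ?sgz0 // /signs node_Fto.
have Fw'1 j : Fto k.+1 w' j = Fto k.+1 w j + t * dotv (L j) eta.
  have Hh : forall j, closed_sign (u k (val j)) (pre h j).
    move=> i; apply: (closed_sign_agree _ _ _ _ Hts).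
    by apply: closed_sign_sgz; rewrite /signs node_Fto.
  rewrite /= Fw' (layer_shift k (u k) h (fun q => t * eta q)) ?dotvZr // => i.
  by rewrite -Fw'; apply: closed_sign_sgz; apply: Sk.
exists w'; split=> [i|p l Hp Hpm].
  rewrite ltnS leq_eqVlt => /orP [/eqP -> l|Hi l]; last by rewrite Ew' //; apply: Hlow.
  have [Hl|Hl] := ltnP l (n k.+1); first by have := Sk (Ordinal Hl); rewrite -node_Fto.
  by rewrite /sgprod /signs !node_out ?projT1_run ?addn0 // sgz0.
by rewrite (He2 t w') ?(Hhigh p l (ltnW Hp)) // !ge_min lexx orbT.
Qed.

Lemma product_realized : exists z, exact_signs 0 m.+1 u z.
Proof.
suff /(_ m.+1 (leqnn _)) [z []] : forall k, (k <= m.+1)%N -> exists w, product_upto k w.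
  by exists z.
elim=> [_|k IH Hk]; first by exists x; split=> // i.
by have [w Hw] := IH (ltnW Hk); apply: product_uptoS Hw.
Qed.

End Product.

Theorem sign_product_face C x y :
  canonF m.+1 C -> relint C x ->
  exists E, canonF m.+1 E /\ face_le C E /\
    forall z, relint E z -> forall (i : 'I_m.+1) (j : 'I_(n i.+1)),
      @signseq R m n W bias z i j =
      @sprod m n (@signseq R m n W bias x) (@signseq R m n W bias y) i j.
Proof.
move=> HC rx; rewrite (canonF_relint_cell _ _ _ HC rx).
have [z Hz] := product_realized x y.
exists (cell 0 m.+1 (sgprod (signs x) (signs y))).
split; first exact: canonF_cell (exact_signs_cell _ _ _ _ Hz).
split; first by apply: face_le_cell => p l Hl; rewrite /sgprod Hl.
move=> z' rz i j; have := relint_cell_exact _ _ _ _ rz Hz i (ltn_ord i) j.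
by rewrite /sprod !signseqE.
Qed.

End Supertransversal.
End Network.

(* Neither the output width nor the cell D matters: only the signs of y do. *)
Theorem lemma18 (R : realType) (m : nat) (n : nat -> nat)
    (W : forall i : nat, 'I_(n i.+1) -> 'I_(n i) -> R)
    (bias : forall i : nat, 'I_(n i.+1) -> R) :
  n m.+1 = 1%N ->
  supertransversal m W bias ->
  forall C D : vec R (n 0%N) -> Prop,
    canonF m W bias m.+1 C -> canonF m W bias m.+1 D ->
    forall x y : vec R (n 0%N), relint C x -> relint D y ->
    exists E : vec R (n 0%N) -> Prop,
      canonF m W bias m.+1 E /\ face_le C E /\
      forall z, relint E z ->
        forall (i : 'I_m.+1) (j : 'I_(n i.+1)),
          @signseq R m n W bias z i j =
          @sprod m n (@signseq R m n W bias x) (@signseq R m n W bias y) i j.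
Proof.
move=> _ Hst C D HC _ x y rx _.
by apply: sign_product_face.
Qed.
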